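(* Let $y$ be a point of the upper half-plane $\mathfrak h_1$ such that $\tau(y)=\gamma y$ for some $\gamma\in\Gamma(2)$, where $\tau(y)=-\overline y$. Then there exist $\beta\in SL(2,\mathbb Z)$ and $Y>0$ such that $y=\beta\cdot iY$.
   Context: $SL(2,\mathbb R)$ acts on $\mathfrak h_1=\{z\in\mathbb C:\mathrm{Im}z>0\}$ by fractional linear transformations. $\Gamma(2)=\{\gamma\in SL(2,\mathbb Z):\gamma\equiv I\bmod2\}$. *)

From mathcomp Require Import all_boot all_order all_algebra.
From mathcomp Require Import reals complex.
Set Implicit Arguments. Unset Strict Implicit. Unset Printing Implicit Defensive.
Import Order.TTheory GRing.Theory Num.Theory.
Local Open Scope ring_scope.
Local Open Scope complex_scope.

Definition in_h1 (R : realType) (z : R[i]) : Prop := 0 < complex.Im z.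

Definition inSL2Z (g : 'M[int]_2) : Prop := \det g = 1.

Definition inGamma2 (g : 'M[int]_2) : Prop :=
  inSL2Z g /\ forall i j : 'I_2, (2 %| g i j - (i == j)%:Z)%Z.

Definition mob (R : realType) (g : 'M[int]_2) (z : R[i]) : R[i] :=
  ((g 0 0)%:~R * z + (g 0 1)%:~R) / ((g 1 0)%:~R * z + (g 1 1)%:~R).

Definition tau (R : realType) (z : R[i]) : R[i] := - z^*.

From mathcomp Require Import all_boot all_order all_algebra.
From mathcomp Require Import reals complex.
From mathcomp Require Import ring lra.
Import Order.TTheory GRing.Theory Num.Theory.
Local Open Scope ring_scope.
Local Open Scope complex_scope.

(* Clearing the denominator in [-conj y = gamma y], the imaginary part forces
   [gamma = [[a, b], [c, a]]] and the real part says that [y] lies on the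
   geodesic [c |y|^2 + 2 a Re y + b = 0].  Writing [a = 2k + 1], [b = 2b'],
   [c = 2c'], the determinant condition becomes [k (k + 1) = b' c'], which the
   four-number lemma factors as [-k = p g], [-(k + 1) = r h], [b' = p r],
   [c' = g h] with [p g - r h = 1].  For [beta = [[p, r], [h, g]]] the geodesic
   equation says exactly that [beta^-1 y] is purely imaginary; it lies in the
   upper half-plane, so it is [i Y] with [Y > 0]. *)

Lemma det_mx2 (R : comPzRingType) (A : 'M[R]_2) :
  \det A = A 0 0 * A 1 1 - A 0 1 * A 1 0.
Proof.
rewrite (expand_det_row _ 0) !big_ord_recl big_ord0 /cofactor !det_mx11 !mxE /=.
have -> : lift 0 (0 : 'I_1) = 1 by apply/val_inj.
have -> : lift 1 (0 : 'I_1) = 0 by apply/val_inj.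
by rewrite expr0 expr1 addr0 mul1r mulN1r mulrN.
Qed.

Lemma intr_complex (R : realType) (k : int) : (k%:~R : R[i]) = (k%:~R : R)%:C.
Proof. by rewrite -(rmorph_int (real_complex R)). Qed.

Section IntegerMobius.

Context {R : realType} {g : 'M[int]_2}.

Local Notation a := ((g 0 0)%:~R : R).
Local Notation b := ((g 0 1)%:~R : R).
Local Notation c := ((g 1 0)%:~R : R).
Local Notation d := ((g 1 1)%:~R : R).
Local Notation denom x v := ((c * x + d) ^+ 2 + (c * v) ^+ 2).

Lemma mobE (x v : R) : mob g (x +i* v) =
  (a * c * (x ^+ 2 + v ^+ 2) + (a * d + b * c) * x + b * d) / denom x v
  +i* ((\det g)%:~R * v / denom x v).
Proof.
rewrite /mob det_mx2 intrB !intrM !intr_complex.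
by simpc; congr (_ +i* _); ring.
Qed.

Lemma mob_denom_gt0 (x v : R) : inSL2Z g -> 0 < v -> 0 < denom x v.
Proof.
rewrite /inSL2Z det_mx2 => detg hv.
rewrite lt_def addr_ge0 ?sqr_ge0 // andbT paddr_eq0 ?sqr_ge0 // !sqrf_eq0.
apply: contraPN detg => /andP[/eqP hd /eqP].
move/eqP; rewrite mulf_eq0 (gt_eqF hv) orbF intr_eq0 => /eqP c0.
move: hd; rewrite c0 mul0r add0r => /eqP; rewrite intr_eq0 => /eqP ->.
by rewrite !mulr0 subrr.
Qed.

Lemma mob_denom_neq0 (z : R[i]) : inSL2Z g -> in_h1 z ->
  (g 1 0)%:~R * z + (g 1 1)%:~R != 0.
Proof.
case: z => x v detg /= hv; rewrite !intr_complex; simpc.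
apply/eqP => -[hre him]; have := mob_denom_gt0 x v detg hv.
by rewrite hre him expr0n /= add0r ltxx.
Qed.

Lemma mob_in_h1 (z : R[i]) : inSL2Z g -> in_h1 z -> in_h1 (mob g z).
Proof.
case: z => x v detg /= hv; rewrite /in_h1 mobE /= detg mul1r.
exact: divr_gt0 hv (mob_denom_gt0 x v detg hv).
Qed.

Lemma tau_eq_mob (x v : R) : inSL2Z g -> 0 < v ->
  tau (x +i* v) = mob g (x +i* v) ->
  g 1 1 = g 0 0 /\ c * (x ^+ 2 + v ^+ 2) + 2 * a * x + b = 0.
Proof.
move=> detg hv hfix.
have den0 := mob_denom_neq0 (x +i* v) detg hv.
have : tau (x +i* v) * ((g 1 0)%:~R * (x +i* v) + (g 1 1)%:~R) =
       (g 0 0)%:~R * (x +i* v) + (g 0 1)%:~R by rewrite hfix divfK.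
rewrite /tau !intr_complex; simpc => -[hre him].
have da : g 1 1 = g 0 0.
  have : v * (d - a) = 0 by lra.
  by move/eqP; rewrite mulf_eq0 (gt_eqF hv) subr_eq0 eqr_int => /eqP.
split=> //; rewrite da in hre; lra.
Qed.

Lemma Re_mob_eq0 (x v : R) :
  a * c * (x ^+ 2 + v ^+ 2) + (a * d + b * c) * x + b * d = 0 ->
  complex.Re (mob g (x +i* v)) = 0.
Proof. by rewrite mobE /= => ->; rewrite mul0r. Qed.

End IntegerMobius.

Lemma four_number_lemma (a b c d : int) : a * b = c * d ->
  exists x y z w, [/\ a = x * y, b = z * w, c = x * z & d = y * w].
Proof.
move=> eq_ab_cd; have [a0|a_neq0] := eqVneq a 0.
  have /eqP : c * d = 0 by rewrite -eq_ab_cd a0 mul0r.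
  rewrite mulf_eq0 => /orP[/eqP c0|/eqP d0].
    by exists 0, d, b, 1; rewrite a0 c0 !mul0r !mulr1.
  by exists c, 0, 1, b; rewrite a0 d0 !mulr0 !mul0r mul1r mulr1.
have [u [v bezout]] := Bezoutz a c; set x := gcdz a c in bezout *.
have x_neq0 : x != 0 by rewrite gcdz_eq0 negb_and a_neq0.
set y := (a %/ x)%Z; set z := (c %/ x)%Z.
have ea : a = y * x by rewrite divzK // dvdz_gcdl.
have ec : c = z * x by rewrite divzK // dvdz_gcdr.
have y_neq0 : y != 0 by apply: contra_neq a_neq0 => y0; rewrite ea y0 mul0r.
have bezout_yz : u * y + v * z = 1.
  by apply: (mulIf x_neq0); rewrite mul1r -{2}bezout ea ec; ring.
have eq_yb_zd : y * b = z * d.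
  by apply: (mulIf x_neq0); rewrite mulrAC -ea mulrAC -ec.
(* Bezout: [d = (u y + v z) d = y (u d + v b)]. *)
have ed : d = y * (u * d + v * b).
  have -> : y * (u * d + v * b) = u * y * d + v * (y * b) by ring.
  by rewrite eq_yb_zd -[LHS]mul1r -bezout_yz; ring.
exists x, y, z, (u * d + v * b); split; rewrite ?(mulrC x) //.
by apply: (mulfI y_neq0); rewrite eq_yb_zd {1}ed mulrCA.
Qed.

Lemma Gamma2_equal_diag_factor (a b c : int) :
  a ^+ 2 - b * c = 1 -> (2 %| a - 1)%Z -> (2 %| b)%Z -> (2 %| c)%Z ->
  exists p r h g : int,
    [/\ p * g - r * h = 1, a = - (p * g + r * h), b = 2 * (p * r) & c = 2 * (g * h)].
Proof.
move=> det /dvdzP[k /(canRL (subrK 1)) ea] /dvdzP[b' eb] /dvdzP[c' ec].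
subst a b c; have : (- k) * (- (k + 1)) = b' * c'.
  have : 4 * ((- k) * (- (k + 1)) - b' * c') = (k * 2 + 1) ^+ 2 - b' * 2 * (c' * 2) - 1.
    by ring.
  by rewrite det subrr => /eqP; rewrite mulf_eq0 /= subr_eq0 => /eqP.
move=> /four_number_lemma[p [g [r [h [ek ek1 eb' ec']]]]].
by exists p, r, h, g; split; rewrite ?eb' ?ec' -?ek -?ek1; ring.
Qed.

Definition mx22 (a b c d : int) : 'M[int]_2 :=
  \matrix_(i, j) if i == 0 then (if j == 0 then a else b) else (if j == 0 then c else d).

Lemma det_mx22 (a b c d : int) : \det (mx22 a b c d) = a * d - b * c.
Proof. by rewrite det_mx2 !mxE. Qed.

Lemma mob_mx22K (R : realType) (a b c d : int) (z : R[i]) :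
  a * d - b * c = 1 -> in_h1 z ->
  mob (mx22 a b c d) (mob (mx22 d (- b) (- c) a) z) = z.
Proof.
move=> det hz.
have detC : (a%:~R * d%:~R - b%:~R * c%:~R : R[i]) = 1 by rewrite -!intrM -intrB det.
have det' : inSL2Z (mx22 d (- b) (- c) a) by rewrite /inSL2Z det_mx22 -det; ring.
have := mob_denom_neq0 z det' hz; rewrite /mob !mxE /= !intrN => u0.
set u := - c%:~R * z + a%:~R in u0 *.
set N := d%:~R * z + - b%:~R.
have e_num : a%:~R * N + b%:~R * u = (a%:~R * d%:~R - b%:~R * c%:~R) * z.
  by rewrite /N /u; ring.
have e_den : c%:~R * N + d%:~R * u = a%:~R * d%:~R - b%:~R * c%:~R.
  by rewrite /N /u; ring.
rewrite detC mul1r in e_num; rewrite detC in e_den.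
have -> : a%:~R * (N / u) + b%:~R = (a%:~R * N + b%:~R * u) / u by field.
have -> : c%:~R * (N / u) + d%:~R = (c%:~R * N + d%:~R * u) / u by field.
by rewrite e_num e_den; field.
Qed.

Theorem lemma5p3 (R : realType) (y : R[i]) (gamma : 'M[int]_2) :
  in_h1 y -> inGamma2 gamma -> tau y = mob gamma y ->
  exists (beta : 'M[int]_2) (Y : R),
    inSL2Z beta /\ 0 < Y /\ y = mob beta ('i * Y%:C).
Proof.
move=> hy [detg parity] hfix; case: y hy hfix => x v /= hv hfix.
have [da circle] := tau_eq_mob x v detg hv hfix.
have [p [r [h [g [detb ea eb ec]]]]] :
    exists p r h g : int, [/\ p * g - r * h = 1, gamma 0 0 = - (p * g + r * h),
      gamma 0 1 = 2 * (p * r) & gamma 1 0 = 2 * (g * h)].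
  apply: Gamma2_equal_diag_factor.
  - by move: detg; rewrite /inSL2Z det_mx2 da expr2.
  - exact: parity 0 0.
  - by have := parity 0 1; rewrite /= subr0.
  - by have := parity 1 0; rewrite /= subr0.
set w := mob (mx22 g (- r) (- h) p) (x +i* v).
have w_h1 : in_h1 w.
  by apply: mob_in_h1 hv; rewrite /inSL2Z det_mx22 -detb; ring.
have Re_w : complex.Re w = 0.
  apply: Re_mob_eq0; rewrite !mxE /= !intrN.
  by rewrite ea eb ec !(intrN, intrD, intrM) in circle; lra.
exists (mx22 p r h g), (complex.Im w); split; first by rewrite /inSL2Z det_mx22.
split=> //; rewrite (_ : 'i * _ = w); first by rewrite mob_mx22K.
by rewrite [RHS]complexE Re_w add0r.
Qed.
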